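(* For any integer $n \geq 1$, define the $n$-qubit state \[ \ket{\psi_n} := \sum_{1 \leq i \leq 2^n - 1} \frac{1}{\sqrt{n}\,\sqrt{2^{\lfloor \log_2 i \rfloor}}} \ket{i}. \] Then for every nonempty subset $S \subseteq [2^n]$ we have $\langle \psi_n | S \rangle \leq \dfrac{2+\sqrt{2}}{\sqrt{n}}$.
   Context: The computational basis of $n$ qubits is indexed by $[2^n] = \{1,\dots,2^n\}$, written $\ket{i}$. For a nonempty subset $S \subseteq [2^n]$, the subset state is $\ket{S} := \frac{1}{\sqrt{|S|}} \sum_{i \in S} \ket{i}$. *)

From HB Require Import structures.
From mathcomp Require Import all_boot all_order all_algebra.
From mathcomp Require Import reals.
Set Implicit Arguments. Unset Strict Implicit. Unset Printing Implicit Defensive.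
Import Order.TTheory GRing.Theory Num.Theory.
Local Open Scope ring_scope.

(* Computational basis [2^n] = {1,...,2^n}: the element i : 'I_(2^n)
   represents the basis index i.+1 (so i.+1 ranges over 1..2^n). *)

Definition psi_amp (R : realType) (n : nat) (i : 'I_(2 ^ n)) : R :=
  if (i.+1 <= 2 ^ n - 1)%N then
    1 / (Num.sqrt (n%:R) * Num.sqrt ((2 ^ trunc_log 2 i.+1)%N%:R))
  else 0.

Definition subset_amp (R : realType) (n : nat) (S : {set 'I_(2 ^ n)})
  (i : 'I_(2 ^ n)) : R :=
  if i \in S then 1 / Num.sqrt (#|S|%:R) else 0.

Definition inner (R : realType) (n : nat) (u v : 'I_(2 ^ n) -> R) : R :=
  \sum_(i : 'I_(2 ^ n)) u i * v i.

From HB Require Import structures.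
From mathcomp Require Import all_boot all_order all_algebra.
From mathcomp Require Import reals.
From mathcomp Require Import lra.
Import Order.TTheory GRing.Theory Num.Theory.
Local Open Scope ring_scope.

(* The amplitude of |psi_n> at basis index k is at most sqrt(2/(n k)), since
   2^(floor (log2 k)) > k/2.  For a nonincreasing weight, a sum over m distinct
   indices is largest on the first m indices, so <psi_n|S> is at most
   sqrt(2/n) (sum_(k <= m) k^(-1/2)) / sqrt m <= 2 sqrt(2/n) with m = |S|,
   and 2 sqrt 2 <= 2 + sqrt 2. *)

Section NonincreasingSums.

Variables (R : realDomainType) (f : nat -> R).
Hypothesis f_noninc : forall a b, (a <= b)%N -> f b <= f a.

Lemma sorted_sum_le_iota (s : seq nat) (a : nat) :
  sorted ltn s -> all (leq a) s ->
  \sum_(x <- s) f x <= \sum_(t <- iota a (size s)) f t.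
Proof.
elim: s a => [|x s IHs] a /= s_sorted; first by rewrite !big_nil.
rewrite !big_cons => /andP[le_ax _]; apply: lerD; first exact: f_noninc.
apply: IHs; first exact: path_sorted s_sorted.
apply/allP=> y ys; apply: leq_ltn_trans le_ax _.
by move/allP: (order_path_min ltn_trans s_sorted); apply.
Qed.

Lemma uniq_sum_le_prefix (s : seq nat) :
  uniq s -> \sum_(x <- s) f x <= \sum_(t < size s) f t.
Proof.
move=> s_uniq; rewrite -(perm_big _ (permEl (perm_sort leq s))).
rewrite -(big_mkord xpredT f) /index_iota subn0 -(size_sort leq).
apply: sorted_sum_le_iota; last by apply/allP.
by rewrite ltn_sorted_uniq_leq sort_uniq s_uniq sort_sorted //; apply: leq_total.
Qed.

Lemma set_sum_le_prefix (N : nat) (S : {set 'I_N}) :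
  \sum_(i in S) f i <= \sum_(t < #|S|) f t.
Proof.
rewrite -big_enum -(big_map val xpredT f) cardE -(size_map val).
by apply: uniq_sum_le_prefix; rewrite (map_inj_uniq val_inj) enum_uniq.
Qed.

End NonincreasingSums.

Lemma inv_sqrt_succ_noninc (R : rcfType) (a b : nat) :
  (a <= b)%N -> (Num.sqrt (b.+1%:R : R))^-1 <= (Num.sqrt (a.+1%:R))^-1.
Proof.
by move=> ab; rewrite lef_pV2 ?posrE ?sqrtr_gt0 ?ltr0n // ler_sqrt ?ler0n // ler_nat.
Qed.

Lemma sum_inv_sqrt_le (R : rcfType) (m : nat) :
  \sum_(t < m) (Num.sqrt (t.+1%:R : R))^-1 <= 2 * Num.sqrt (m%:R).
Proof.
elim: m => [|m IHm]; first by rewrite big_ord0 sqrtr0 mulr0.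
rewrite big_ord_recr /=.
set a := Num.sqrt (m%:R : R); set b := Num.sqrt (m.+1%:R : R).
have a_ge0 : 0 <= a by apply: sqrtr_ge0.
have b_gt0 : 0 < b by rewrite sqrtr_gt0 ltr0n.
have a2 : a ^+ 2 = m%:R by rewrite sqr_sqrtr ?ler0n.
have b2 : b ^+ 2 = m%:R + 1 by rewrite sqr_sqrtr ?ler0n // -natr1.
(* 2 b (b - a) >= (b + a) (b - a) = b^2 - a^2 = 1 *)
have step : b^-1 <= 2 * b - 2 * a.
  by rewrite -div1r ler_pdivrMr // mulrBl; clear IHm; nra.
by apply: le_trans (lerD IHm step) _; rewrite addrC subrK.
Qed.

Lemma psi_amp_le (R : realType) (n : nat) (i : 'I_(2 ^ n)) :
  (1 <= n)%N ->
  psi_amp R i <= Num.sqrt 2 / Num.sqrt (n%:R) / Num.sqrt (i.+1%:R).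
Proof.
move=> n_ge1.
have sn_gt0 : 0 < Num.sqrt (n%:R : R) by rewrite sqrtr_gt0 ltr0n.
have si_gt0 : 0 < Num.sqrt (i.+1%:R : R) by rewrite sqrtr_gt0 ltr0n.
rewrite /psi_amp; case: ifP => _; last by rewrite !divr_ge0 ?sqrtr_ge0.
set L := trunc_log 2 i.+1.
have sL_gt0 : 0 < Num.sqrt ((2 ^ L)%N%:R : R) by rewrite sqrtr_gt0 ltr0n expn_gt0.
have i_le : (i.+1 <= 2 * 2 ^ L)%N by rewrite -expnS ltnW ?trunc_log_ltn.
have si_le : Num.sqrt (i.+1%:R : R) <= Num.sqrt 2 * Num.sqrt ((2 ^ L)%N%:R)
  by rewrite -sqrtrM // ler_sqrt ?mulr_ge0 // -natrM ler_nat.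
rewrite mul1r invfM mulrAC mulrC ler_pM2r ?invr_gt0 //.
by rewrite ler_pdivlMr // mulrC ler_pdivrMr.
Qed.

Lemma inner_subset_amp (R : realType) (n : nat) (u : 'I_(2 ^ n) -> R)
  (S : {set 'I_(2 ^ n)}) :
  inner u (subset_amp R S) = (\sum_(i in S) u i) / Num.sqrt (#|S|%:R).
Proof.
rewrite /inner /subset_amp big_distrl [RHS]big_mkcond /=.
by apply: eq_bigr => i _; case: ifP; rewrite ?mulr0 ?mul1r.
Qed.

Lemma sqrtr2_le2 (R : rcfType) : Num.sqrt (2 : R) <= 2.
Proof.
have s2 : Num.sqrt (2 : R) ^+ 2 = 2 by rewrite sqr_sqrtr.
have := sqrtr_ge0 (2 : R); nra.
Qed.

Theorem mainTheorem3 (R : realType) (n : nat) (hn : (1 <= n)%N)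
  (S : {set 'I_(2 ^ n)}) (hS : S != set0) :
  @inner R n (@psi_amp R n) (@subset_amp R n S) <= (2 + Num.sqrt 2) / Num.sqrt (n%:R).
Proof.
set c := Num.sqrt 2 / Num.sqrt (n%:R : R).
have c_ge0 : 0 <= c by rewrite divr_ge0 ?sqrtr_ge0.
have sS_gt0 : 0 < Num.sqrt (#|S|%:R : R) by rewrite sqrtr_gt0 ltr0n card_gt0.
have psi_sum_le : \sum_(i in S) psi_amp R i <= c * (2 * Num.sqrt (#|S|%:R)).
  apply: le_trans (_ : _ <= \sum_(i in S) c / Num.sqrt (i.+1%:R)) _.
    by apply: ler_sum => i _; apply: psi_amp_le.
  rewrite -big_distrr ler_wpM2l //= (le_trans _ (sum_inv_sqrt_le _ _)) //.
  exact: (set_sum_le_prefix R _ (@inv_sqrt_succ_noninc R) _ S).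
rewrite inner_subset_amp ler_pdivrMr // (le_trans psi_sum_le) // mulrA ler_pM2r //.
rewrite /c mulrAC; apply: ler_wpM2r; first by rewrite invr_ge0 sqrtr_ge0.
by have := sqrtr2_le2 R; lra.
Qed.
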